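(* Let $f\in\mathcal X_M'$ satisfy $f(0)=1$ and $\mathcal D_f\ne\{0\}$. Then for every $k\in\mathbb N$ the set $A_k(f)$ is $\tau_{AW}$-open in $\mathcal X_M'$, contains $f$, and is convex (if $g,h\in A_k(f)$ and $a\in[0,1]$ then $ag+(1-a)h\in A_k(f)$); moreover $\{A_k(f)\}_{k\in\mathbb N}$ is a local base for $\tau_{AW}$ at $f$ (indeed $A_{2k}(f)\subset V_k(f)$).
   Context: For $f:\mathbb R\to[-\infty,\infty]$, $\mathrm{epi}(f)=\{(\theta,b):b\ge f(\theta)\}$, $\mathcal D_f=\{\theta:f(\theta)<\infty\}$. On $\mathbb R^2$ use the box metric $d(x,y)=\max(|x_1-y_1|,|x_2-y_2|)$, $d(x,A)=\inf_{y\in A}d(x,y)$, $B_r=\{x:d(0,x)<r\}$, $\overline B_r=\{x:d(0,x)\le r\}$. $\mathcal X_M'$ is the set of lower semicontinuous convex $f:\mathbb R\to[0,\infty]$ with $f(0)<\infty$, with the Attouch–Wets topology $\tau_{AW}$, whose local base at $f$ is $V_k(f)=\{g\in\mathcal X_M':\sup_{x\in\overline B_k}|d(x,\mathrm{epi}(g))-d(x,\mathrm{epi}(f))|<1/k\}$, $k\in\mathbb N$. For $f\in\mathcal X_M'$ with $f(0)=1$, $\mathcal D_f\ne\{0\}$ and $k\in\mathbb N$: let $\eta_{l}=\inf\{\theta:(\theta,f(\theta))\in B_{2k+2}\}$, $\eta_{r}=\sup\{\theta:(\theta,f(\theta))\in B_{2k+2}\}$; fix $0<\epsilon<(\eta_r-\eta_l)/2$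 such that $d((a,f(a)),(b,f(b)))<1/(2k)$ for all $a,b\in[\eta_l,\eta_l+\epsilon]$ and for all $a,b\in[\eta_r-\epsilon,\eta_r]$; define $f^\sharp_k(\theta)=f(\theta)+1/(2k)$ for $\theta\in[\eta_l+\epsilon,\eta_r-\epsilon]$ and $f^\sharp_k(\theta)=+\infty$ otherwise. For $g$ let $\theta_{g,l}=\inf\mathcal D_g$, $\theta_{g,r}=\sup\mathcal D_g$; write $h\lll g$ if $\theta_{h,l}<\theta_{g,l}$, $\theta_{g,r}<\theta_{h,r}$ and $h(\theta)<g(\theta)$ for all $\theta\in[\theta_{g,l},\theta_{g,r}]$. Let $W(g)=\{h\in\mathcal X_M':h\lll g\}$ and $A_k(f)=V_k(f^\sharp_k)\cap W(f^\sharp_k)$. *)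

From Stdlib Require Import Reals Lra ClassicalEpsilon.
Open Scope R_scope.

(** Extended nonnegative values: [0,+oo] is represented by Fin r | PInf. *)
Inductive ER := Fin (r : R) | PInf.

Definition ER_le (x y : ER) : Prop :=
  match x, y with
  | _, PInf => True
  | PInf, Fin _ => False
  | Fin a, Fin b => a <= b
  end.

Definition ER_lt (x y : ER) : Prop :=
  match x, y with
  | Fin a, Fin b => a < b
  | Fin _, PInf => True
  | PInf, _ => False
  end.

Definition ER_add (x y : ER) : ER :=
  match x, y with
  | Fin a, Fin b => Fin (a + b)
  | _, _ => PInf
  end.

(** scaling by a real a >= 0, with the convention 0 * (+oo) = 0 *)
Definition ER_scale (a : R) (x : ER) : ER :=
  match x with
  | Fin r => Fin (a * r)
  | PInf => if Req_EM_T a 0 then Fin 0 else PInf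
  end.

Definition fn := R -> ER.

Definition epi (f : fn) (p : R * R) : Prop := ER_le (f (fst p)) (Fin (snd p)).
Definition dom (f : fn) (t : R) : Prop := f t <> PInf.

Definition boxd (x y : R * R) : R :=
  Rmax (Rabs (fst x - fst y)) (Rabs (snd x - snd y)).

Definition is_glb (E : R -> Prop) (m : R) : Prop :=
  (forall x, E x -> m <= x) /\ (forall b, (forall x, E x -> b <= x) -> b <= m).

Definition Rinf (E : R -> Prop) : R := epsilon (inhabits 0) (fun m => is_glb E m).
Definition Rsup (E : R -> Prop) : R := epsilon (inhabits 0) (fun m => is_lub E m).

Definition dist_epi (g : fn) (x : R * R) : R :=
  Rinf (fun t => exists y, epi g y /\ t = boxd x y).

Definition lsc (f : fn) : Prop :=
  forall x c, ER_lt (Fin c) (f x) ->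
    exists d, 0 < d /\ forall y, Rabs (y - x) < d -> ER_lt (Fin c) (f y).

Definition convex (f : fn) : Prop :=
  forall x y a, 0 < a < 1 ->
    ER_le (f (a * x + (1 - a) * y))
          (ER_add (ER_scale a (f x)) (ER_scale (1 - a) (f y))).

Definition XM (f : fn) : Prop :=
  lsc f /\ convex f /\ (forall t, ER_le (Fin 0) (f t)) /\ f 0 <> PInf.

(** V_k(g): sup_{x in closed box of radius k} |d(x,epi h) - d(x,epi g)| < 1/k *)
Definition V (k : nat) (g : fn) (h : fn) : Prop :=
  XM h /\
  exists c, c < / INR k /\
    forall x, boxd (0, 0) x <= INR k ->
      Rabs (dist_epi h x - dist_epi g x) <= c.

(** Attouch-Wets open sets of X_M' (topology with local bases V_k, k >= 1) *)
Definition AW_open (U : fn -> Prop) : Prop :=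
  (forall g, U g -> XM g) /\
  forall g, U g -> exists k, (0 < k)%nat /\ forall h, V k g h -> U h.

Definition graph_in_box (f : fn) (k : nat) (t : R) : Prop :=
  exists v, f t = Fin v /\ boxd (0, 0) (t, v) < 2 * INR k + 2.

Definition eta_l (f : fn) (k : nat) : R := Rinf (graph_in_box f k).
Definition eta_r (f : fn) (k : nat) : R := Rsup (graph_in_box f k).

Definition close_on (f : fn) (k : nat) (lo hi : R) : Prop :=
  forall a b, lo <= a <= hi -> lo <= b <= hi ->
    exists fa fb, f a = Fin fa /\ f b = Fin fb /\
      boxd (a, fa) (b, fb) < / (2 * INR k).

Definition eps_ok (f : fn) (k : nat) (e : R) : Prop :=
  0 < e /\ e < (eta_r f k - eta_l f k) / 2 /\
  close_on f k (eta_l f k) (eta_l f k + e) /\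
  close_on f k (eta_r f k - e) (eta_r f k).

Definition fsharp (f : fn) (k : nat) (e : R) : fn := fun t =>
  if Rle_dec (eta_l f k + e) t then
    if Rle_dec t (eta_r f k - e) then ER_add (f t) (Fin (/ (2 * INR k)))
    else PInf
  else PInf.

(** h <<< g ; theta_{g,l}, theta_{g,r} are inf / sup of dom g.
    "theta_{h,l} < theta_{g,l}" is written as: some point of dom h lies below theta_{g,l}. *)
Definition lll (h g : fn) : Prop :=
  exists l r, is_glb (dom g) l /\ is_lub (dom g) r /\
    (exists t, dom h t /\ t < l) /\ (exists t, dom h t /\ r < t) /\
    (forall t, l <= t <= r -> ER_lt (h t) (g t)).

Definition W (g : fn) (h : fn) : Prop := XM h /\ lll h g.

Definition A (f : fn) (k : nat) (e : R) (h : fn) : Prop :=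
  V k (fsharp f k e) h /\ W (fsharp f k e) h.

Definition comb (a : R) (g h : fn) : fn := fun t =>
  ER_add (ER_scale a (g t)) (ER_scale (1 - a) (h t)).

(* Idea. [f#] is [f] lifted by [1/(2k)] and cut off just inside the ends of the part of its graph
   lying in the box of radius [2k+2]; over the box of radius [k] its epigraph is uniformly
   within distance [< 1/k] of [epi f].  Hence [f] lies in [A_k(f)], and by the triangle inequality
   [A_(2k)(f)] is inside [V_k(f)], so the [A_k(f)] form a local base.  If [g] and [h] lie strictly
   below [f#] on its domain, so does a convex combination [p], whence
   [epi f# <= epi p <= epi g \/ epi h] and the distances to [epi p] are squeezed between those of
   [g], [h] and [f#].  Finally a [g] in [A_k(f)] stays below [f#] by a uniform gap on the compact
   domain of [f#], and every convex [h] Attouch-Wets close enough to [g] is, on that domain,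
   below [g] plus that gap and finite slightly beyond it. *)

From Stdlib Require Import Reals Lra Lia ClassicalEpsilon Classical FunctionalExtensionality.
Open Scope R_scope.

Lemma Rabs_le_iff x c : Rabs x <= c <-> - c <= x <= c.
Proof. unfold Rabs; destruct (Rcase_abs x); split; intros; lra. Qed.

Lemma Rabs_lt_iff x c : Rabs x < c <-> - c < x < c.
Proof. unfold Rabs; destruct (Rcase_abs x); split; intros; lra. Qed.

Lemma boxd_le_iff x y c :
  boxd x y <= c <-> Rabs (fst x - fst y) <= c /\ Rabs (snd x - snd y) <= c.
Proof.
  unfold boxd; split.
  - intros H; split; eapply Rle_trans; [apply Rmax_l | exact H | apply Rmax_r | exact H].
  - intros [H1 H2]; apply Rmax_lub; assumption.
Qed.

Lemma boxd_lt_iff x y c :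
  boxd x y < c <-> Rabs (fst x - fst y) < c /\ Rabs (snd x - snd y) < c.
Proof.
  unfold boxd; split.
  - intros H; split; eapply Rle_lt_trans; [apply Rmax_l | exact H | apply Rmax_r | exact H].
  - intros [H1 H2]; apply Rmax_lub_lt; assumption.
Qed.

Lemma boxd_nonneg x y : 0 <= boxd x y.
Proof. unfold boxd; eapply Rle_trans; [apply Rabs_pos | apply Rmax_l]. Qed.

Lemma boxd_refl x : boxd x x = 0.
Proof. unfold boxd; rewrite !Rminus_diag, Rabs_R0; apply Rmax_left; lra. Qed.

Lemma boxd_sym x y : boxd x y = boxd y x.
Proof.
  unfold boxd; rewrite (Rabs_minus_sym (fst x)), (Rabs_minus_sym (snd x)); reflexivity.
Qed.

Lemma boxd_triangle x y z : boxd x z <= boxd x y + boxd y z.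
Proof.
  destruct (proj1 (boxd_le_iff x y _) (Rle_refl _)) as [Hx1 Hx2].
  destruct (proj1 (boxd_le_iff y z _) (Rle_refl _)) as [Hy1 Hy2].
  apply boxd_le_iff; split.
  - replace (fst x - fst z) with ((fst x - fst y) + (fst y - fst z)) by ring.
    eapply Rle_trans; [apply Rabs_triang | lra].
  - replace (snd x - snd z) with ((snd x - snd y) + (snd y - snd z)) by ring.
    eapply Rle_trans; [apply Rabs_triang | lra].
Qed.

Lemma lub_exists (E : R -> Prop) :
  (exists x, E x) -> (exists m, forall x, E x -> x <= m) -> exists s, is_lub E s.
Proof.
  intros Hne [m Hm]. destruct (completeness E) as [s Hs]; [exists m; exact Hm | exact Hne |].
  exists s; exact Hs.
Qed.

Lemma glb_exists (E : R -> Prop) :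
  (exists x, E x) -> (exists m, forall x, E x -> m <= x) -> exists i, is_glb E i.
Proof.
  intros [x0 Hx0] [m Hm].
  destruct (lub_exists (fun y => E (- y))) as [s [Hs1 Hs2]].
  - exists (- x0); rewrite Ropp_involutive; exact Hx0.
  - exists (- m); intros y Hy; specialize (Hm _ Hy); lra.
  - exists (- s); split.
    + intros x Hx. enough (- x <= s) by lra. apply Hs1; rewrite Ropp_involutive; exact Hx.
    + intros b Hb. enough (s <= - b) by lra. apply Hs2; intros y Hy; specialize (Hb _ Hy); lra.
Qed.

Lemma Rinf_is_glb (E : R -> Prop) :
  (exists x, E x) -> (exists m, forall x, E x -> m <= x) -> is_glb E (Rinf E).
Proof. intros H1 H2; unfold Rinf; apply epsilon_spec, glb_exists; assumption. Qed.

Lemma Rsup_is_lub (E : R -> Prop) :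
  (exists x, E x) -> (exists m, forall x, E x -> x <= m) -> is_lub E (Rsup E).
Proof. intros H1 H2; unfold Rsup; apply epsilon_spec, lub_exists; assumption. Qed.

Lemma glb_approx (E : R -> Prop) i r : is_glb E i -> i < r -> exists x, E x /\ x < r.
Proof.
  intros [_ Hi] Hr. apply NNPP; intros Hn.
  enough (r <= i) by lra. apply Hi; intros x Hx. apply Rnot_lt_le; intros Hxr; eauto.
Qed.

Lemma lub_approx (E : R -> Prop) s r : is_lub E s -> r < s -> exists x, E x /\ r < x.
Proof.
  intros [_ Hs] Hr. apply NNPP; intros Hn.
  enough (s <= r) by lra. apply Hs; intros x Hx. apply Rnot_lt_le; intros Hxr; eauto.
Qed.

Lemma glb_unique (E : R -> Prop) i j : is_glb E i -> is_glb E j -> i = j.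
Proof. intros [Hi1 Hi2] [Hj1 Hj2]; apply Rle_antisym; auto. Qed.

Lemma lub_unique (E : R -> Prop) s t : is_lub E s -> is_lub E t -> s = t.
Proof. intros [Hs1 Hs2] [Ht1 Ht2]; apply Rle_antisym; auto. Qed.

(** * Distance to an epigraph *)

Definition proper (g : fn) : Prop := exists t, dom g t.

Lemma dist_epi_glb g x :
  proper g -> is_glb (fun r => exists y, epi g y /\ r = boxd x y) (dist_epi g x).
Proof.
  intros [t Ht]. apply Rinf_is_glb.
  - destruct (g t) as [v |] eqn:Egt; [| contradiction].
    exists (boxd x (t, v)), (t, v); split; [| reflexivity].
    unfold epi; cbn; rewrite Egt; cbn; lra.
  - exists 0; intros r [y [_ ->]]; apply boxd_nonneg.
Qed.

Lemma dist_epi_le_boxd g x y : proper g -> epi g y -> dist_epi g x <= boxd x y.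
Proof. intros Hg Hy; apply (proj1 (dist_epi_glb g x Hg)); eauto. Qed.

Lemma dist_epi_nonneg g x : proper g -> 0 <= dist_epi g x.
Proof.
  intros Hg; apply (proj2 (dist_epi_glb g x Hg)); intros r [y [_ ->]]; apply boxd_nonneg.
Qed.

Lemma dist_epi_approx g x r :
  proper g -> dist_epi g x < r -> exists y, epi g y /\ boxd x y < r.
Proof.
  intros Hg Hr.
  destruct (glb_approx _ _ _ (dist_epi_glb g x Hg) Hr) as [s [[y [Hy ->]] Hs]]; eauto.
Qed.

Lemma dist_epi_mem g y : proper g -> epi g y -> dist_epi g y = 0.
Proof.
  intros Hg Hy; apply Rle_antisym; [| apply dist_epi_nonneg; exact Hg].
  rewrite <- (boxd_refl y); apply dist_epi_le_boxd; assumption.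
Qed.

Lemma dist_epi_antitone g h x :
  proper g -> proper h -> (forall y, epi g y -> epi h y) -> dist_epi h x <= dist_epi g x.
Proof.
  intros Hg Hh Hgh; apply (proj2 (dist_epi_glb g x Hg)); intros r [y [Hy ->]].
  apply dist_epi_le_boxd; auto.
Qed.

Lemma dist_epi_union g h p x :
  proper g -> proper h -> proper p -> (forall y, epi p y -> epi g y \/ epi h y) ->
  Rmin (dist_epi g x) (dist_epi h x) <= dist_epi p x.
Proof.
  intros Hg Hh Hp Hpgh; apply (proj2 (dist_epi_glb p x Hp)); intros r [y [Hy ->]].
  destruct (Hpgh y Hy) as [Hy' | Hy'].
  - eapply Rle_trans; [apply Rmin_l | apply dist_epi_le_boxd; assumption].
  - eapply Rle_trans; [apply Rmin_r | apply dist_epi_le_boxd; assumption].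
Qed.

Lemma dist_epi_le_add g h x c :
  proper g -> proper h ->
  (forall y, epi g y -> boxd x y < dist_epi g x + 1 -> exists y', epi h y' /\ boxd y y' <= c) ->
  dist_epi h x <= dist_epi g x + c.
Proof.
  intros Hg Hh Hmatch. apply Rnot_lt_le; intros Hlt.
  set (r := Rmin 1 (dist_epi h x - dist_epi g x - c)).
  assert (Hr1 : r <= 1) by apply Rmin_l.
  assert (Hr2 : r <= dist_epi h x - dist_epi g x - c) by apply Rmin_r.
  assert (Hr : 0 < r) by (apply Rmin_pos; lra).
  destruct (dist_epi_approx g x (dist_epi g x + r) Hg ltac:(lra)) as [y [Hy Hxy]].
  destruct (Hmatch y Hy ltac:(lra)) as [y' [Hy' Hyy']].
  pose proof (dist_epi_le_boxd h x y' Hh Hy'). pose proof (boxd_triangle x y y'). lra.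
Qed.

Definition epi_close (k : nat) (c : R) (g h : fn) : Prop :=
  forall x, boxd (0, 0) x <= INR k -> Rabs (dist_epi h x - dist_epi g x) <= c.

Lemma epi_close_trans k c1 c2 f g h :
  epi_close k c1 f g -> epi_close k c2 g h -> epi_close k (c1 + c2) f h.
Proof.
  intros H1 H2 x Hx.
  replace (dist_epi h x - dist_epi f x)
    with ((dist_epi h x - dist_epi g x) + (dist_epi g x - dist_epi f x)) by ring.
  eapply Rle_trans; [apply Rabs_triang | specialize (H1 x Hx); specialize (H2 x Hx); lra].
Qed.

Lemma epi_close_sym k c g h : epi_close k c g h -> epi_close k c h g.
Proof. intros H x Hx; rewrite Rabs_minus_sym; apply H; exact Hx. Qed.

Lemma epi_close_shrink k m c g h : INR k <= INR m -> epi_close m c g h -> epi_close k c g h.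
Proof. intros Hkm H x Hx; apply H; lra. Qed.

Lemma epi_close_between k cg ch f g h p :
  epi_close k cg f g -> epi_close k ch f h ->
  (forall x, Rmin (dist_epi g x) (dist_epi h x) <= dist_epi p x <= dist_epi f x) ->
  epi_close k (Rmax cg ch) f p.
Proof.
  intros Hg Hh Hp x Hx.
  specialize (Hg x Hx); specialize (Hh x Hx); specialize (Hp x).
  apply Rabs_le_iff in Hg, Hh; apply Rabs_le_iff.
  pose proof (Rmax_l cg ch); pose proof (Rmax_r cg ch).
  unfold Rmin in Hp; destruct (Rle_dec (dist_epi g x) (dist_epi h x)); lra.
Qed.

(* Junk value [0] where [g t = PInf]. *)
Definition fval (g : fn) (t : R) : R := match g t with Fin r => r | PInf => 0 end.

Lemma fval_eq g t : dom g t -> g t = Fin (fval g t).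
Proof. unfold dom, fval; destruct (g t); congruence. Qed.

Lemma fval_Fin g t r : g t = Fin r -> fval g t = r.
Proof. unfold fval; intros ->; reflexivity. Qed.

Lemma ER_le_PInf z : ER_le z PInf.
Proof. destruct z; exact I. Qed.

Lemma ER_le_trans x y z : ER_le x y -> ER_le y z -> ER_le x z.
Proof. destruct x, y, z; cbn; intros; try lra; tauto. Qed.

Lemma ER_lt_le x y : ER_lt x y -> ER_le x y.
Proof. destruct x, y; cbn; intros; try lra; tauto. Qed.

Lemma ER_lt_Fin_inv z r : ER_lt z (Fin r) -> exists s, z = Fin s /\ s < r.
Proof. destruct z; cbn; [eauto | contradiction]. Qed.

Lemma ER_le_Fin_inv z r : ER_le z (Fin r) -> exists s, z = Fin s /\ s <= r.
Proof. destruct z; cbn; [eauto | contradiction]. Qed.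

Lemma ER_scale_PInf a : a <> 0 -> ER_scale a PInf = PInf.
Proof. intros Ha; cbn; destruct (Req_EM_T a 0); [contradiction | reflexivity]. Qed.

Lemma fval_nonneg g t : XM g -> 0 <= fval g t.
Proof. intros [_ [_ [Hg _]]]; specialize (Hg t); unfold fval; destruct (g t); cbn in *; lra. Qed.

Lemma XM_proper g : XM g -> proper g.
Proof. intros [_ [_ [_ Hg0]]]; exists 0; exact Hg0. Qed.

Lemma epi_sub_of_le g h : (forall t, ER_le (h t) (g t)) -> forall y, epi g y -> epi h y.
Proof. intros Hhg [t v]; unfold epi; cbn; apply ER_le_trans, Hhg. Qed.

(** * Convex functions on the line *)

Lemma convex_chord g p q t gp gq :
  convex g -> (p < t < q \/ q < t < p) -> g p = Fin gp -> g q = Fin gq ->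
  exists gt, g t = Fin gt /\ gt <= gp + (t - p) / (q - p) * (gq - gp).
Proof.
  intros Hg Ht Hp Hq.
  assert (Hqp : q - p <> 0) by lra.
  set (a := (t - p) / (q - p)).
  assert (Ha : 0 < a < 1).
  { unfold a; destruct Ht as [Ht | Ht]; split.
    - apply Rdiv_lt_0_compat; lra.
    - apply (Rmult_lt_reg_r (q - p)); [lra |]; field_simplify; lra.
    - replace ((t - p) / (q - p)) with ((p - t) / (p - q)) by (field; lra).
      apply Rdiv_lt_0_compat; lra.
    - replace ((t - p) / (q - p)) with ((p - t) / (p - q)) by (field; lra).
      apply (Rmult_lt_reg_r (p - q)); [lra |]; field_simplify; lra. }
  specialize (Hg q p a Ha).
  replace (a * q + (1 - a) * p) with t in Hg by (unfold a; field; exact Hqp).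
  rewrite Hp, Hq in Hg; cbn in Hg.
  destruct (ER_le_Fin_inv _ _ Hg) as [gt [Hgt Hle]].
  exists gt; split; [exact Hgt | lra].
Qed.

Lemma convex_le_near g p q t gp gq r M :
  convex g -> (p < t < q \/ q < t < p) -> Rabs (t - p) <= r * Rabs (q - p) ->
  g p = Fin gp -> g q = Fin gq -> gq - gp <= M -> 0 <= M ->
  exists gt, g t = Fin gt /\ gt <= gp + r * M.
Proof.
  intros Hg Ht Hr Hp Hq HM HM0.
  destruct (convex_chord g p q t gp gq Hg Ht Hp Hq) as [gt [Hgt Hle]].
  exists gt; split; [exact Hgt |].
  assert (Hlam : 0 < (t - p) / (q - p) <= r).
  { destruct Ht as [Ht | Ht].
    - rewrite !Rabs_right in Hr by lra. split; [apply Rdiv_lt_0_compat; lra |].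
      apply (Rmult_le_reg_r (q - p)); [lra |]; field_simplify; lra.
    - rewrite !Rabs_left in Hr by lra.
      replace ((t - p) / (q - p)) with ((p - t) / (p - q)) by (field; lra).
      split; [apply Rdiv_lt_0_compat; lra |].
      apply (Rmult_le_reg_r (p - q)); [lra |]; field_simplify; lra. }
  set (lam := (t - p) / (q - p)) in *. nra.
Qed.

Lemma convex_dom_between g p q t : convex g -> dom g p -> dom g q -> p <= t <= q -> dom g t.
Proof.
  intros Hg Hp Hq Ht.
  destruct (Req_dec t p) as [-> | Htp]; [exact Hp |].
  destruct (Req_dec t q) as [-> | Htq]; [exact Hq |].
  destruct (convex_chord g p q t _ _ Hg ltac:(lra) (fval_eq g p Hp) (fval_eq g q Hq))
    as [gt [Hgt _]].
  unfold dom; rewrite Hgt; discriminate.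
Qed.

Lemma convex_le_max g p q t :
  convex g -> dom g p -> dom g q -> p <= t <= q -> fval g t <= Rmax (fval g p) (fval g q).
Proof.
  intros Hg Hp Hq Ht.
  pose proof (Rmax_l (fval g p) (fval g q)); pose proof (Rmax_r (fval g p) (fval g q)).
  destruct (Req_dec t p) as [-> | Htp]; [lra |].
  destruct (Req_dec t q) as [-> | Htq]; [lra |].
  destruct (convex_le_near g p q t (fval g p) (fval g q) 1
              (Rmax (fval g p) (fval g q) - fval g p) Hg ltac:(lra))
    as [gt [Hgt Hle]]; try lra.
  - rewrite !Rabs_right by lra; lra.
  - apply fval_eq; exact Hp.
  - apply fval_eq; exact Hq.
  - rewrite (fval_Fin _ _ _ Hgt); lra.
Qed.

Definition lsc_on (a b : R) (phi : R -> R) : Prop :=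
  forall x, a <= x <= b -> forall c, c < phi x ->
    exists d, 0 < d /\ forall y, a <= y <= b -> Rabs (y - x) < d -> c < phi y.

Lemma lsc_on_plus a b phi psi :
  lsc_on a b phi -> lsc_on a b psi -> lsc_on a b (fun t => phi t + psi t).
Proof.
  intros Hphi Hpsi x Hx c Hc.
  set (w := (phi x + psi x - c) / 2).
  destruct (Hphi x Hx (phi x - w) ltac:(unfold w; lra)) as [d1 [Hd1 H1]].
  destruct (Hpsi x Hx (psi x - w) ltac:(unfold w; lra)) as [d2 [Hd2 H2]].
  exists (Rmin d1 d2); split; [apply Rmin_pos; assumption |].
  intros y Hy Hyx. pose proof (Rmin_l d1 d2); pose proof (Rmin_r d1 d2).
  specialize (H1 y Hy ltac:(lra)); specialize (H2 y Hy ltac:(lra)); unfold w in *; lra.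
Qed.

Lemma XM_lsc_on f a b s :
  XM f -> (forall t, a <= t <= b -> dom f t) -> lsc_on a b (fun t => fval f t + s).
Proof.
  intros [Hf _] Hdom x Hx c Hc.
  destruct (Hf x (c - s)) as [d [Hd H]]; [rewrite (fval_eq f x (Hdom x Hx)); cbn; lra |].
  exists d; split; [exact Hd |]; intros y Hy Hyx.
  specialize (H y Hyx); rewrite (fval_eq f y (Hdom y Hy)) in H; cbn in H; lra.
Qed.

Lemma convex_usc_on g t1 t2 a b :
  convex g -> dom g t1 -> dom g t2 -> t1 < a -> b < t2 -> lsc_on a b (fun t => - fval g t).
Proof.
  intros Hg H1 H2 Ha Hb x Hx c Hc.
  assert (Hdx : dom g x) by (apply (convex_dom_between g t1 t2); auto; lra).
  set (gx := fval g x) in Hc |- *.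
  set (K := Rmax 1 (Rmax (fval g t1 - gx) (fval g t2 - gx))).
  assert (HK : 1 <= K) by apply Rmax_l.
  assert (HK1 : fval g t1 - gx <= K)
    by (eapply Rle_trans; [apply Rmax_l | apply Rmax_r]).
  assert (HK2 : fval g t2 - gx <= K)
    by (eapply Rle_trans; [apply Rmax_r | apply Rmax_r]).
  set (rho := Rmin (x - t1) (t2 - x)).
  assert (Hrho1 : rho <= x - t1) by apply Rmin_l.
  assert (Hrho2 : rho <= t2 - x) by apply Rmin_r.
  assert (Hrho : 0 < rho) by (apply Rmin_pos; lra).
  set (r := Rmin (1 / 2) ((- c - gx) / (2 * K))).
  assert (Hr1 : r <= 1 / 2) by apply Rmin_l.
  assert (Hr2 : r <= (- c - gx) / (2 * K)) by apply Rmin_r.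
  assert (Hr : 0 < r) by (apply Rmin_pos; [lra | apply Rdiv_lt_0_compat; lra]).
  assert (HrK : r * K < - c - gx).
  { apply (Rmult_le_compat_r K) in Hr2; [| lra].
    replace ((- c - gx) / (2 * K) * K) with ((- c - gx) / 2) in Hr2 by (field; lra).
    lra. }
  exists (r * rho); split; [nra |]; intros y Hy Hyx.
  destruct (Req_dec y x) as [-> | Hyx']; [exact Hc |].
  assert (Hside : exists q, (x < y < q \/ q < y < x) /\ dom g q /\ rho <= Rabs (q - x)
                            /\ fval g q - gx <= K).
  { apply Rabs_lt_iff in Hyx.
    destruct (Rlt_dec y x).
    - exists t1; split; [right; nra | split; [exact H1 |]].
      rewrite Rabs_left by lra; split; lra.
    - exists t2; split; [left; nra | split; [exact H2 |]].
      rewrite Rabs_right by lra; split; lra. }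
  destruct Hside as [q [Hyq [Hq [Hrq HqK]]]].
  destruct (convex_le_near g x q y gx (fval g q) r K Hg Hyq) as [gy [Hgy Hle]].
  - apply Rlt_le, (Rlt_le_trans _ (r * rho)); [exact Hyx |]. apply Rmult_le_compat_l; lra.
  - apply fval_eq; exact Hdx.
  - apply fval_eq; exact Hq.
  - exact HqK.
  - lra.
  - rewrite (fval_Fin _ _ _ Hgy); lra.
Qed.

Lemma lsc_on_pos_lower_bound a b phi :
  a <= b -> (forall x, a <= x <= b -> 0 < phi x) -> lsc_on a b phi ->
  exists m, 0 < m /\ forall x, a <= x <= b -> m <= phi x.
Proof.
  intros Hab Hpos Hlsc.
  set (S := fun y => a <= y <= b /\ exists m, 0 < m /\ forall x, a <= x <= y -> m <= phi x).
  assert (Sa : S a).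
  { split; [lra |]. exists (phi a); split; [apply Hpos; lra |].
    intros x Hx; replace x with a by lra; lra. }
  destruct (lub_exists S) as [s Hs]; [exists a; exact Sa | exists b; intros x [Hx _]; lra |].
  assert (Has : a <= s) by (apply (proj1 Hs); exact Sa).
  assert (Hsb : s <= b) by (apply (proj2 Hs); intros x [Hx _]; lra).
  pose proof (Hpos s ltac:(lra)) as Hps.
  destruct (Hlsc s ltac:(lra) (phi s / 2) ltac:(lra)) as [d [Hd Hnear]].
  destruct (lub_approx S s (s - d) Hs ltac:(lra)) as [y [[Hy [my [Hmy Hmy']]] Hys]].
  set (z := Rmin (s + d / 2) b).
  assert (Hz1 : z <= s + d / 2) by apply Rmin_l.
  assert (Hz2 : z <= b) by apply Rmin_r.
  assert (Sz : S z).
  { split; [split; [apply Rmin_glb; lra | exact Hz2] |].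
    exists (Rmin my (phi s / 2)); split; [apply Rmin_pos; lra |].
    pose proof (Rmin_l my (phi s / 2)); pose proof (Rmin_r my (phi s / 2)).
    intros x Hx; destruct (Rle_dec x y) as [Hxy | Hxy].
    - specialize (Hmy' x ltac:(lra)); lra.
    - enough (phi s / 2 < phi x) by lra.
      apply Hnear; [lra | apply Rabs_lt_iff; lra]. }
  assert (Hzs : z <= s) by (apply (proj1 Hs); exact Sz).
  destruct (Rle_dec b (s + d / 2)) as [Hb | Hb].
  - replace z with b in Sz by (symmetry; apply Rmin_right; lra).
    destruct Sz as [_ [m [Hm Hm']]]; exists m; split; [exact Hm | exact Hm'].
  - assert (z = s + d / 2) by (apply Rmin_left; lra); lra.
Qed.

(** * Convex combinations *)

Lemma comb_Fin a g h t x y : g t = Fin x -> h t = Fin y -> comb a g h t = Fin (a * x + (1 - a) * y).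
Proof. intros Hx Hy; unfold comb; rewrite Hx, Hy; reflexivity. Qed.

Lemma comb_cases a g h t : 0 < a < 1 ->
  (exists x y, g t = Fin x /\ h t = Fin y /\ comb a g h t = Fin (a * x + (1 - a) * y)) \/
  comb a g h t = PInf.
Proof.
  intros Ha; unfold comb.
  destruct (g t) as [x |], (h t) as [y |].
  - left; eauto.
  - right; rewrite (ER_scale_PInf (1 - a)) by lra; reflexivity.
  - right; rewrite (ER_scale_PInf a) by lra; reflexivity.
  - right; rewrite (ER_scale_PInf a) by lra; reflexivity.
Qed.

Lemma comb_swap a g h : comb a g h = comb (1 - a) h g.
Proof.
  apply functional_extensionality; intros t; unfold comb.
  replace (1 - (1 - a)) with a by ring.
  destruct (ER_scale a (g t)), (ER_scale (1 - a) (h t)); cbn; try reflexivity; f_equal; ring.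
Qed.

Lemma ER_scale_0 z : ER_scale 0 z = Fin 0.
Proof. destruct z; cbn; [f_equal; ring | destruct (Req_EM_T 0 0); [reflexivity | lra]]. Qed.

Lemma ER_scale_1 z : ER_scale 1 z = z.
Proof. destruct z; cbn; [f_equal; ring | destruct (Req_EM_T 1 0); [lra | reflexivity]]. Qed.

Lemma comb_1 g h : comb 1 g h = g.
Proof.
  apply functional_extensionality; intros t; unfold comb.
  replace (1 - 1) with 0 by ring; rewrite ER_scale_0, ER_scale_1.
  destruct (g t); cbn; [f_equal; ring | reflexivity].
Qed.

Lemma comb_0 g h : comb 0 g h = h.
Proof. rewrite comb_swap; replace (1 - 0) with 1 by ring; apply comb_1. Qed.

Lemma dom_comb a g h t : 0 < a < 1 -> dom g t -> dom h t -> dom (comb a g h) t.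
Proof.
  intros Ha Hg Hh; unfold dom.
  rewrite (comb_Fin a g h t _ _ (fval_eq g t Hg) (fval_eq h t Hh)); discriminate.
Qed.

Lemma epi_comb_sub_union a g h y : 0 < a < 1 -> epi (comb a g h) y -> epi g y \/ epi h y.
Proof.
  intros Ha; destruct y as [t v]; unfold epi; cbn.
  destruct (comb_cases a g h t Ha) as [[x [z [Hx [Hz ->]]]] | ->]; [| contradiction].
  rewrite Hx, Hz; cbn; intros Hv.
  destruct (Rle_dec x v); [left; assumption | right; nra].
Qed.

Lemma comb_lsc_at_PInf a g h x :
  0 < a < 1 -> lsc g -> (forall t, ER_le (Fin 0) (h t)) -> g x = PInf ->
  forall c, exists d, 0 < d /\ forall y, Rabs (y - x) < d -> ER_lt (Fin c) (comb a g h y).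
Proof.
  intros Ha Hg Hh Hx c.
  destruct (Hg x (c / a)) as [d [Hd Hnear]]; [rewrite Hx; exact I |].
  exists d; split; [exact Hd |]; intros y Hy; specialize (Hnear y Hy).
  destruct (comb_cases a g h y Ha) as [[gy [hy [Hgy [Hhy ->]]]] | ->]; [| exact I].
  rewrite Hgy in Hnear; specialize (Hh y); rewrite Hhy in Hh; cbn in Hnear, Hh |- *.
  apply (Rmult_lt_compat_l a) in Hnear; [| lra].
  replace (a * (c / a)) with c in Hnear by (field; lra).
  assert (0 <= (1 - a) * hy) by (apply Rmult_le_pos; lra); lra.
Qed.

Lemma comb_lsc a g h :
  0 < a < 1 -> lsc g -> lsc h ->
  (forall t, ER_le (Fin 0) (g t)) -> (forall t, ER_le (Fin 0) (h t)) ->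
  lsc (comb a g h).
Proof.
  intros Ha Hg Hh Hg0 Hh0 x c Hc.
  destruct (g x) as [gx |] eqn:Hgx; [destruct (h x) as [hx |] eqn:Hhx |].
  - rewrite (comb_Fin a g h x gx hx Hgx Hhx) in Hc; cbn in Hc.
    set (w := (a * gx + (1 - a) * hx - c) / 2).
    destruct (Hg x (gx - w)) as [d1 [Hd1 H1]]; [rewrite Hgx; cbn; unfold w; lra |].
    destruct (Hh x (hx - w)) as [d2 [Hd2 H2]]; [rewrite Hhx; cbn; unfold w; lra |].
    exists (Rmin d1 d2); split; [apply Rmin_pos; assumption |]; intros y Hy.
    pose proof (Rmin_l d1 d2); pose proof (Rmin_r d1 d2).
    specialize (H1 y ltac:(lra)); specialize (H2 y ltac:(lra)).
    destruct (comb_cases a g h y Ha) as [[gy [hy [Hgy [Hhy ->]]]] | ->]; [| exact I].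
    rewrite Hgy in H1; rewrite Hhy in H2; cbn in H1, H2 |- *.
    assert (a * (gx - w) < a * gy) by (apply Rmult_lt_compat_l; lra).
    assert ((1 - a) * (hx - w) < (1 - a) * hy) by (apply Rmult_lt_compat_l; lra).
    unfold w in *; lra.
  - rewrite comb_swap.
    apply (comb_lsc_at_PInf (1 - a) h g x ltac:(lra) Hh Hg0 Hhx c).
  - apply (comb_lsc_at_PInf a g h x Ha Hg Hh0 Hgx c).
Qed.

Lemma comb_convex a g h : 0 < a < 1 -> convex g -> convex h -> convex (comb a g h).
Proof.
  intros Ha Hg Hh x y b Hb.
  destruct (comb_cases a g h x Ha) as [[gx [hx [Hgx [Hhx ->]]]] | ->];
    [| rewrite ER_scale_PInf by lra; apply ER_le_PInf].
  destruct (comb_cases a g h y Ha) as [[gy [hy [Hgy [Hhy ->]]]] | ->];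
    [| rewrite (ER_scale_PInf (1 - b)) by lra; destruct (ER_scale b _); apply ER_le_PInf].
  specialize (Hg x y b Hb); specialize (Hh x y b Hb).
  rewrite Hgx, Hgy in Hg; rewrite Hhx, Hhy in Hh; cbn in Hg, Hh.
  destruct (ER_le_Fin_inv _ _ Hg) as [gz [Hgz Hgz']].
  destruct (ER_le_Fin_inv _ _ Hh) as [hz [Hhz Hhz']].
  rewrite (comb_Fin a g h _ gz hz Hgz Hhz); cbn.
  assert (a * gz <= a * (b * gx + (1 - b) * gy)) by (apply Rmult_le_compat_l; lra).
  assert ((1 - a) * hz <= (1 - a) * (b * hx + (1 - b) * hy)) by (apply Rmult_le_compat_l; lra).
  nra.
Qed.

Lemma comb_XM a g h : 0 < a < 1 -> XM g -> XM h -> XM (comb a g h).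
Proof.
  intros Ha [Lg [Cg [Ng Dg]]] [Lh [Ch [Nh Dh]]].
  split; [apply comb_lsc; assumption | split; [apply comb_convex; assumption | split]].
  - intros t; destruct (comb_cases a g h t Ha) as [[x [y [Hx [Hy ->]]]] | ->]; [| exact I].
    specialize (Ng t); specialize (Nh t); rewrite Hx in Ng; rewrite Hy in Nh; cbn in *.
    assert (0 <= a * x) by (apply Rmult_le_pos; lra).
    assert (0 <= (1 - a) * y) by (apply Rmult_le_pos; lra); lra.
  - apply dom_comb; assumption.
Qed.

(** * Attouch-Wets closeness controls convex functions from above *)

Lemma INR_eventually_gt (B : R) : exists N : nat, forall m, (N <= m)%nat -> B < INR m.
Proof.
  destruct (INR_unbounded B) as [N HN]; exists N; intros m Hm.
  apply le_INR in Hm; lra.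
Qed.

Lemma Rinv_INR_eventually_lt (r : R) :
  0 < r -> exists N : nat, forall m, (N <= m)%nat -> / INR m < r.
Proof.
  intros Hr; destruct (INR_eventually_gt (/ r)) as [N HN]; exists N; intros m Hm.
  specialize (HN m Hm); pose proof (Rinv_0_lt_compat r Hr).
  rewrite <- (Rinv_inv r); apply Rinv_lt_contravar; [nra | exact HN].
Qed.

Lemma epi_close_graph_approx m c g h t gt r :
  proper h -> epi_close m c g h -> g t = Fin gt -> boxd (0, 0) (t, gt) <= INR m -> c < r ->
  exists s hs, Rabs (s - t) < r /\ h s = Fin hs /\ hs < gt + r.
Proof.
  intros Hh Hgh Hgt Hbox Hcr.
  assert (Hepi : epi g (t, gt)) by (unfold epi; cbn; rewrite Hgt; cbn; lra).
  assert (Hg : proper g) by (exists t; unfold dom; rewrite Hgt; discriminate).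
  specialize (Hgh _ Hbox); rewrite (dist_epi_mem g _ Hg Hepi), Rminus_0_r in Hgh.
  apply Rabs_le_iff in Hgh.
  destruct (dist_epi_approx h (t, gt) r Hh ltac:(lra)) as [[s v] [Hsv Hnear]].
  apply boxd_lt_iff in Hnear; cbn in Hnear; destruct Hnear as [Hs Hv].
  unfold epi in Hsv; cbn in Hsv; destruct (ER_le_Fin_inv _ _ Hsv) as [hs [Hhs Hhsv]].
  apply Rabs_lt_iff in Hv.
  exists s, hs; split; [rewrite Rabs_minus_sym; exact Hs | split; [exact Hhs | lra]].
Qed.

Lemma XM_bounded_between g t1 t2 t :
  XM g -> dom g t1 -> dom g t2 -> t1 <= t <= t2 ->
  dom g t /\ 0 <= fval g t <= Rmax (fval g t1) (fval g t2).
Proof.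
  intros Hg Ht1 Ht2 Ht; split; [apply (convex_dom_between g t1 t2); auto; apply Hg |].
  split; [apply fval_nonneg; exact Hg | apply convex_le_max; auto; apply Hg].
Qed.

Lemma epi_close_graph_approx_on m c g h t1 t2 r :
  XM g -> XM h -> dom g t1 -> dom g t2 -> epi_close m c g h -> c < r ->
  Rmax (Rmax (Rabs t1) (Rabs t2)) (Rmax (fval g t1) (fval g t2)) <= INR m ->
  forall t, t1 <= t <= t2 ->
    exists s hs, Rabs (s - t) < r /\ h s = Fin hs /\ 0 <= hs < fval g t + r.
Proof.
  intros Hg Hh Ht1 Ht2 Hgh Hcr HB t Ht.
  destruct (XM_bounded_between g t1 t2 t Hg Ht1 Ht2 Ht) as [Hdt Hgt].
  destruct (epi_close_graph_approx m c g h t (fval g t) r (XM_proper h Hh) Hgh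
              (fval_eq g t Hdt)) as [s [hs [Hst [Hhs Hhs']]]]; [| exact Hcr |].
  - pose proof (Rmax_l (Rmax (Rabs t1) (Rabs t2)) (Rmax (fval g t1) (fval g t2))).
    pose proof (Rmax_r (Rmax (Rabs t1) (Rabs t2)) (Rmax (fval g t1) (fval g t2))).
    pose proof (Rmax_l (Rabs t1) (Rabs t2)); pose proof (Rmax_r (Rabs t1) (Rabs t2)).
    pose proof (Rle_abs t2); pose proof (Rle_abs (- t1)); rewrite Rabs_Ropp in *.
    apply boxd_le_iff; cbn; rewrite !Rminus_0_l, !Rabs_Ropp.
    split; apply Rabs_le_iff; lra.
  - exists s, hs; split; [exact Hst | split; [exact Hhs |]].
    split; [| exact Hhs']. rewrite <- (fval_Fin _ _ _ Hhs); apply fval_nonneg; exact Hh.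
Qed.

Lemma convex_le_near_sample h s1 s2 s t hs1 hs2 hs eta sigma M :
  convex h -> s1 + sigma / 2 <= t <= s2 - sigma / 2 -> Rabs (s - t) < eta ->
  0 < eta -> 0 < sigma -> 0 <= M -> h s1 = Fin hs1 -> h s2 = Fin hs2 -> h s = Fin hs ->
  0 <= hs -> hs1 <= M -> hs2 <= M ->
  exists ht, h t = Fin ht /\ ht <= hs + eta * (2 * M / sigma).
Proof.
  intros Hh Ht Hst Heta Hsigma HM Hhs1 Hhs2 Hhs Hhs0 HM1 HM2; apply Rabs_lt_iff in Hst.
  assert (HMs : 0 <= eta * (2 * M / sigma))
    by (apply Rmult_le_pos; [lra | apply Rle_mult_inv_pos; lra]).
  destruct (Req_dec s t) as [<- | Hst']; [exists hs; split; [exact Hhs | lra] |].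
  assert (Hfar : exists q hq, (s < t < q \/ q < t < s) /\ sigma / 2 <= Rabs (q - s) /\
                              h q = Fin hq /\ hq - hs <= M).
  { destruct (Rlt_dec s t) as [Hlt | Hge].
    - exists s2, hs2; rewrite Rabs_right by lra.
      split; [left; lra | split; [lra | split; [exact Hhs2 | lra]]].
    - exists s1, hs1; rewrite Rabs_left by lra.
      split; [right; lra | split; [lra | split; [exact Hhs1 | lra]]]. }
  destruct Hfar as [q [hq [Htq [Hqs [Hhq Hhq']]]]].
  replace (eta * (2 * M / sigma)) with (2 * eta / sigma * M) by (field; lra).
  apply (convex_le_near h s q t hs hq _ M Hh Htq); try assumption.
  apply (Rmult_le_compat_l (2 * eta / sigma)) in Hqs; [| apply Rle_mult_inv_pos; lra].
  replace (2 * eta / sigma * (sigma / 2)) with eta in Hqs by (field; lra).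
  apply Rabs_le_iff; lra.
Qed.

(* Each point of the graph of [g] over [t1, t2] has a point of [epi h] nearby; convexity of [h]
   along the chord to the one near [t1] or [t2] (far from [t]) turns this into an upper bound. *)
Lemma epi_close_convex_upper g t1 t2 a b w :
  XM g -> dom g t1 -> dom g t2 -> t1 < a -> a <= b -> b < t2 -> 0 < w ->
  exists N : nat, forall m h c, (N <= m)%nat -> XM h -> c < / INR m -> epi_close m c g h ->
    (exists s, dom h s /\ s < a) /\ (exists s, dom h s /\ b < s) /\
    (forall t, a <= t <= b -> exists ht, h t = Fin ht /\ ht < fval g t + w).
Proof.
  intros Hg Ht1 Ht2 Ha Hab Hb Hw.
  set (M := Rmax (fval g t1) (fval g t2)).
  assert (HMt1 : fval g t1 <= M) by apply Rmax_l.
  assert (HMt2 : fval g t2 <= M) by apply Rmax_r.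
  assert (HM0 : 0 <= M) by (pose proof (fval_nonneg g t1 Hg); lra).
  set (sigma := Rmin (a - t1) (t2 - b)).
  assert (Hs1 : sigma <= a - t1) by apply Rmin_l.
  assert (Hs2 : sigma <= t2 - b) by apply Rmin_r.
  assert (Hs : 0 < sigma) by (apply Rmin_pos; lra).
  set (K := 2 * (M + 1) / sigma).
  assert (HK : 0 <= K) by (apply Rle_mult_inv_pos; lra).
  set (eta := Rmin (Rmin 1 (sigma / 2)) (w / (1 + K))).
  assert (He0 : eta <= 1) by (eapply Rle_trans; [apply Rmin_l | apply Rmin_l]).
  assert (He1 : eta <= sigma / 2) by (eapply Rle_trans; [apply Rmin_l | apply Rmin_r]).
  assert (He2 : eta <= w / (1 + K)) by apply Rmin_r.
  assert (He : 0 < eta) by (repeat apply Rmin_pos; try lra; apply Rdiv_lt_0_compat; lra).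
  assert (HeK : eta + eta * K <= w).
  { apply (Rmult_le_compat_r (1 + K)) in He2; [| lra].
    replace (w / (1 + K) * (1 + K)) with w in He2 by (field; lra). lra. }
  destruct (INR_eventually_gt (Rmax (Rmax (Rabs t1) (Rabs t2)) M)) as [N1 HN1].
  destruct (Rinv_INR_eventually_lt eta He) as [N2 HN2].
  exists (Nat.max N1 N2); intros m h c Hm Hh Hc Hgh.
  specialize (HN1 m ltac:(lia)); specialize (HN2 m ltac:(lia)).
  pose proof (epi_close_graph_approx_on m c g h t1 t2 eta Hg Hh Ht1 Ht2 Hgh ltac:(lra)
                (Rlt_le _ _ HN1)) as Happrox.
  destruct (Happrox t1 ltac:(lra)) as [s1 [hs1 [Hst1 [Hhs1 Hhs1']]]].
  destruct (Happrox t2 ltac:(lra)) as [s2 [hs2 [Hst2 [Hhs2 Hhs2']]]].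
  apply Rabs_lt_iff in Hst1, Hst2.
  split; [exists s1; split; [unfold dom; rewrite Hhs1; discriminate | lra] |].
  split; [exists s2; split; [unfold dom; rewrite Hhs2; discriminate | lra] |].
  intros t Ht.
  destruct (Happrox t ltac:(lra)) as [s [hs [Hst [Hhs Hhs']]]].
  destruct (convex_le_near_sample h s1 s2 s t hs1 hs2 hs eta sigma (M + 1) (proj1 (proj2 Hh))
              ltac:(lra) Hst He Hs ltac:(lra) Hhs1 Hhs2 Hhs ltac:(lra) ltac:(lra) ltac:(lra))
    as [ht [Hht Hle]].
  exists ht; split; [exact Hht |].
  fold K in Hle.
  assert (0 <= eta * K) by nra; lra.
Qed.

(** * The functions f#_k *)

Section Sharp.

Variables (f : fn) (k : nat) (e : R).
Hypotheses (Hf : XM f) (Hf0 : f 0 = Fin 1) (Hk : (0 < k)%nat) (He : eps_ok f k e).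

Local Notation el := (eta_l f k).
Local Notation er := (eta_r f k).
Local Notation margin := (/ (2 * INR k)).
Local Notation fs := (fsharp f k e).

Lemma margin_pos : 0 < margin.
Proof. apply Rinv_0_lt_compat; apply lt_0_INR in Hk; lra. Qed.

Lemma graph_in_box_abs t : graph_in_box f k t -> Rabs t < 2 * INR k + 2.
Proof.
  intros [v [_ Hv]]; apply boxd_lt_iff in Hv; cbn in Hv.
  rewrite Rabs_minus_sym, Rminus_0_r in Hv; apply Hv.
Qed.

Lemma graph_in_box_0 : graph_in_box f k 0.
Proof.
  exists 1; split; [exact Hf0 |]; apply boxd_lt_iff; cbn.
  rewrite Rminus_diag, Rabs_R0, Rminus_0_l, Rabs_Ropp, Rabs_R1; pose proof (pos_INR k); lra.
Qed.

Lemma graph_in_box_range t : graph_in_box f k t -> el <= t <= er.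
Proof.
  intros Ht.
  assert (Hlow : exists m, forall x, graph_in_box f k x -> m <= x)
    by (exists (- (2 * INR k + 2)); intros x Hx; apply graph_in_box_abs, Rabs_lt_iff in Hx; lra).
  assert (Hup : exists m, forall x, graph_in_box f k x -> x <= m)
    by (exists (2 * INR k + 2); intros x Hx; apply graph_in_box_abs, Rabs_lt_iff in Hx; lra).
  split.
  - apply (Rinf_is_glb _ (ex_intro _ 0 graph_in_box_0) Hlow); exact Ht.
  - apply (Rsup_is_lub _ (ex_intro _ 0 graph_in_box_0) Hup); exact Ht.
Qed.

Lemma eps_bounds : 0 < e /\ el + e < er - e.
Proof. destruct He as [He0 [Hlr _]]; lra. Qed.

Lemma close_on_facts lo hi a b :
  close_on f k lo hi -> lo <= a <= hi -> lo <= b <= hi ->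
  dom f a /\ Rabs (a - b) < margin /\ Rabs (fval f a - fval f b) < margin.
Proof.
  intros Hc Ha Hb; destruct (Hc a b Ha Hb) as [fa [fb [Hfa [Hfb Hab]]]].
  apply boxd_lt_iff in Hab; cbn in Hab.
  rewrite (fval_Fin _ _ _ Hfa), (fval_Fin _ _ _ Hfb).
  split; [unfold dom; rewrite Hfa; discriminate | exact Hab].
Qed.

Lemma dom_f_eta t : el <= t <= er -> dom f t.
Proof.
  intros Ht; pose proof eps_bounds; destruct He as [_ [_ [Hl Hr]]].
  apply (convex_dom_between f el er); [apply Hf | | | exact Ht].
  - apply (close_on_facts el (el + e) el el Hl); lra.
  - apply (close_on_facts (er - e) er er er Hr); lra.
Qed.

Lemma fsharp_in t : el + e <= t <= er - e -> fs t = Fin (fval f t + margin).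
Proof.
  intros Ht; unfold fsharp.
  destruct (Rle_dec (el + e) t); [| lra]; destruct (Rle_dec t (er - e)); [| lra].
  pose proof eps_bounds; rewrite (fval_eq f t) by (apply dom_f_eta; lra); reflexivity.
Qed.

Lemma fsharp_out t : ~ (el + e <= t <= er - e) -> fs t = PInf.
Proof.
  intros Ht; unfold fsharp.
  destruct (Rle_dec (el + e) t); [destruct (Rle_dec t (er - e)); [lra |] |]; reflexivity.
Qed.

Lemma dom_fsharp t : dom fs t <-> el + e <= t <= er - e.
Proof.
  split.
  - intros Ht; apply NNPP; intros Hn; apply Ht, fsharp_out, Hn.
  - intros Ht; unfold dom; rewrite fsharp_in by exact Ht; discriminate.
Qed.

Lemma proper_fsharp : proper fs.
Proof. pose proof eps_bounds; exists (el + e); apply dom_fsharp; lra. Qed.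

Lemma lt_fsharp_inv g t :
  el + e <= t <= er - e -> ER_lt (g t) (fs t) -> exists x, g t = Fin x /\ x < fval f t + margin.
Proof. intros Ht; rewrite fsharp_in by exact Ht; apply ER_lt_Fin_inv. Qed.

Lemma lll_fsharp_iff h :
  lll h fs <->
  (exists t, dom h t /\ t < el + e) /\ (exists t, dom h t /\ er - e < t) /\
  (forall t, el + e <= t <= er - e -> ER_lt (h t) (fs t)).
Proof.
  pose proof eps_bounds.
  assert (Hl : is_glb (dom fs) (el + e)).
  { split; [intros x Hx; apply dom_fsharp in Hx; lra |].
    intros b Hb; apply Hb, dom_fsharp; lra. }
  assert (Hr : is_lub (dom fs) (er - e)).
  { split; [intros x Hx; apply dom_fsharp in Hx; lra |].
    intros b Hb; apply Hb, dom_fsharp; lra. }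
  split.
  - intros [l [r [Hl' [Hr' Hh]]]].
    rewrite (glb_unique _ _ _ Hl' Hl), (lub_unique _ _ _ Hr' Hr) in Hh; exact Hh.
  - intros Hh; exists (el + e), (er - e); auto.
Qed.

Lemma le_fsharp_of_lll h : lll h fs -> forall t, ER_le (h t) (fs t).
Proof.
  intros Hh t; apply lll_fsharp_iff in Hh as [_ [_ Hlt]].
  destruct (Rle_dec (el + e) t), (Rle_dec t (er - e));
    [apply ER_lt_le, Hlt; lra | rewrite fsharp_out by lra; apply ER_le_PInf ..].
Qed.

Lemma lll_f_fsharp : lll f fs.
Proof.
  pose proof eps_bounds; pose proof margin_pos.
  apply lll_fsharp_iff; split; [| split].
  - exists el; split; [apply dom_f_eta |]; lra.
  - exists er; split; [apply dom_f_eta |]; lra.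
  - intros t Ht; rewrite fsharp_in by exact Ht.
    rewrite (fval_eq f t) by (apply dom_f_eta; lra); cbn; lra.
Qed.

(* [close_on] only gives [fval f p - margin < fval f t] pointwise; the strict inequality
   [c < 1/k] in [V] needs it uniformly, which lower semicontinuity provides. *)
Lemma close_on_gap lo hi p :
  close_on f k lo hi -> lo <= p <= hi ->
  exists del, 0 < del /\ forall t, lo <= t <= hi -> fval f p - margin + del <= fval f t.
Proof.
  intros Hc Hp.
  destruct (lsc_on_pos_lower_bound lo hi (fun t => fval f t + (margin - fval f p)))
    as [del [Hdel Hlow]].
  - lra.
  - intros t Ht; destruct (close_on_facts lo hi t p Hc Ht Hp) as [_ [_ Hv]].
    apply Rabs_lt_iff in Hv; lra.
  - apply XM_lsc_on; [exact Hf |]; intros t Ht; apply (close_on_facts lo hi t p Hc Ht Hp).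
  - exists del; split; [exact Hdel |]; intros t Ht; specialize (Hlow t Ht); cbn in Hlow; lra.
Qed.

Lemma epi_f_match_end lo hi p del t v :
  close_on f k lo hi -> lo <= t <= hi -> lo <= p <= hi -> el + e <= p <= er - e ->
  del <= margin -> (forall s, lo <= s <= hi -> fval f p - margin + del <= fval f s) ->
  epi f (t, v) -> exists y, epi fs y /\ boxd (t, v) y <= 2 * margin - del.
Proof.
  intros Hc Ht Hp Hpe Hdel Hgap Hv.
  exists (p, Rmax v (fval f p) + margin).
  pose proof (Rmax_l v (fval f p)); pose proof (Rmax_r v (fval f p)).
  destruct (close_on_facts lo hi t p Hc Ht Hp) as [Hdt [Htp _]].
  unfold epi in Hv; cbn in Hv; rewrite (fval_eq f t Hdt) in Hv; cbn in Hv.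
  specialize (Hgap t Ht); pose proof margin_pos.
  split.
  - unfold epi; cbn; rewrite fsharp_in by exact Hpe; cbn; lra.
  - apply boxd_le_iff; cbn; split; [lra |].
    apply Rabs_le_iff; unfold Rmax; destruct (Rle_dec v (fval f p)); lra.
Qed.

Lemma epi_f_match :
  exists del, 0 < del /\
    forall t v, el <= t <= er -> epi f (t, v) ->
      exists y, epi fs y /\ boxd (t, v) y <= 2 * margin - del.
Proof.
  pose proof eps_bounds; pose proof margin_pos; destruct He as [_ [_ [Hcl Hcr]]].
  destruct (close_on_gap el (el + e) (el + e) Hcl ltac:(lra)) as [dl [Hdl Hgl]].
  destruct (close_on_gap (er - e) er (er - e) Hcr ltac:(lra)) as [dr [Hdr Hgr]].
  set (del := Rmin (Rmin dl dr) margin).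
  assert (Hd1 : del <= dl) by (eapply Rle_trans; [apply Rmin_l | apply Rmin_l]).
  assert (Hd2 : del <= dr) by (eapply Rle_trans; [apply Rmin_l | apply Rmin_r]).
  assert (Hd3 : del <= margin) by apply Rmin_r.
  exists del; split; [repeat apply Rmin_pos; assumption |]; intros t v Ht Hv.
  destruct (Rlt_dec t (el + e)) as [Htl | Htl]; [| destruct (Rle_dec t (er - e)) as [Htr | Htr]].
  - apply (epi_f_match_end el (el + e) (el + e) del t v Hcl); [lra .. | | exact Hv].
    intros s Hs; specialize (Hgl s Hs); lra.
  - exists (t, v + margin); split.
    + unfold epi in Hv |- *; cbn in Hv |- *; rewrite fsharp_in by lra.
      rewrite (fval_eq f t) in Hv by (apply dom_f_eta; lra); cbn in Hv |- *; lra.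
    + apply boxd_le_iff; cbn; rewrite Rminus_diag, Rabs_R0.
      replace (v - (v + margin)) with (- margin) by ring; rewrite Rabs_Ropp, Rabs_right; lra.
  - apply (epi_f_match_end (er - e) er (er - e) del t v Hcr); [lra .. | | exact Hv].
    intros s Hs; specialize (Hgr s Hs); lra.
Qed.

Lemma epi_f_box_range t v : epi f (t, v) -> boxd (0, 0) (t, v) < 2 * INR k + 2 -> el <= t <= er.
Proof.
  intros Hv Hbox; apply graph_in_box_range.
  unfold epi in Hv; cbn in Hv; destruct (ER_le_Fin_inv _ _ Hv) as [ft [Hft Hftv]].
  assert (Hft0 : 0 <= ft) by (rewrite <- (fval_Fin _ _ _ Hft); apply fval_nonneg, Hf).
  exists ft; split; [exact Hft |].
  apply boxd_lt_iff in Hbox; apply boxd_lt_iff; cbn in Hbox |- *.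
  destruct Hbox as [Ht Hv']; split; [exact Ht |].
  rewrite Rminus_0_l, Rabs_Ropp in Hv' |- *; rewrite Rabs_right by lra.
  pose proof (Rle_abs v); lra.
Qed.

Lemma fsharp_epi_close : exists c, c < / INR k /\ epi_close k c fs f.
Proof.
  destruct epi_f_match as [del [Hdel Hmatch]].
  assert (H2m : 2 * margin = / INR k) by (apply lt_0_INR in Hk; field; lra).
  exists (2 * margin - del); split; [lra |]; intros x Hx.
  assert (Hf1 : proper f) by (apply XM_proper, Hf).
  assert (Hlow : dist_epi f x <= dist_epi fs x)
    by (apply dist_epi_antitone; [apply proper_fsharp | exact Hf1 |];
        apply epi_sub_of_le, le_fsharp_of_lll, lll_f_fsharp).
  assert (Hup : dist_epi fs x <= dist_epi f x + (2 * margin - del)).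
  { apply dist_epi_le_add; [exact Hf1 | apply proper_fsharp |]; intros [t v] Hv Hxv.
    assert (H01 : dist_epi f x <= boxd x (0, 1))
      by (apply dist_epi_le_boxd; [exact Hf1 | unfold epi; cbn; rewrite Hf0; cbn; lra]).
    assert (Hx01 : boxd x (0, 1) <= INR k + 1).
    { apply boxd_le_iff in Hx; apply boxd_le_iff; cbn in Hx |- *.
      rewrite !Rminus_0_l, !Rabs_Ropp in Hx; destruct Hx as [Hx1 Hx2].
      rewrite Rminus_0_r; split; [lra |]; unfold Rminus.
      eapply Rle_trans; [apply Rabs_triang | rewrite Rabs_Ropp, Rabs_R1; lra]. }
    pose proof (boxd_triangle (0, 0) x (t, v)); rewrite (boxd_sym (0, 0) x) in *.
    apply Hmatch; [apply (epi_f_box_range t v Hv); lra | exact Hv]. }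
  rewrite Rabs_minus_sym, Rabs_right; lra.
Qed.

Lemma A_self : A f k e f.
Proof.
  destruct fsharp_epi_close as [c [Hc Hclose]].
  split; [split; [exact Hf | exists c; split; assumption] | split; [exact Hf | exact lll_f_fsharp]].
Qed.

Lemma lll_fsharp_comb g h a :
  0 < a < 1 -> XM g -> XM h -> lll g fs -> lll h fs -> lll (comb a g h) fs.
Proof.
  intros Ha Xg Xh Wg Wh; pose proof eps_bounds.
  apply lll_fsharp_iff in Wg as [[tg1 [Dg1 Tg1]] [[tg2 [Dg2 Tg2]] Lg]].
  apply lll_fsharp_iff in Wh as [[th1 [Dh1 Th1]] [[th2 [Dh2 Th2]] Lh]].
  assert (Hdom : forall t, el + e <= t <= er - e -> dom g t /\ dom h t).
  { intros t Ht.
    destruct (lt_fsharp_inv g t Ht (Lg t Ht)) as [x [Hx _]].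
    destruct (lt_fsharp_inv h t Ht (Lh t Ht)) as [y [Hy _]].
    unfold dom; rewrite Hx, Hy; split; discriminate. }
  destruct (Hdom (el + e) ltac:(lra)) as [Gl Hl], (Hdom (er - e) ltac:(lra)) as [Gr Hr].
  apply lll_fsharp_iff; split; [| split].
  - pose proof (Rmax_l tg1 th1); pose proof (Rmax_r tg1 th1).
    assert (Hlt : Rmax tg1 th1 < el + e) by (apply Rmax_lub_lt; assumption).
    exists (Rmax tg1 th1); split; [apply dom_comb; [exact Ha | |] | exact Hlt].
    + apply (convex_dom_between g tg1 (el + e)); [apply Xg | exact Dg1 | exact Gl | lra].
    + apply (convex_dom_between h th1 (el + e)); [apply Xh | exact Dh1 | exact Hl | lra].
  - pose proof (Rmin_l tg2 th2); pose proof (Rmin_r tg2 th2).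
    assert (Hgt : er - e < Rmin tg2 th2) by (apply Rmin_glb_lt; assumption).
    exists (Rmin tg2 th2); split; [apply dom_comb; [exact Ha | |] | exact Hgt].
    + apply (convex_dom_between g (er - e) tg2); [apply Xg | exact Gr | exact Dg2 | lra].
    + apply (convex_dom_between h (er - e) th2); [apply Xh | exact Hr | exact Dh2 | lra].
  - intros t Ht.
    destruct (lt_fsharp_inv g t Ht (Lg t Ht)) as [x [Hx Hxf]].
    destruct (lt_fsharp_inv h t Ht (Lh t Ht)) as [y [Hy Hyf]].
    rewrite (comb_Fin a g h t x y Hx Hy), fsharp_in by exact Ht; cbn; nra.
Qed.

Lemma A_comb g h a : A f k e g -> A f k e h -> 0 <= a <= 1 -> A f k e (comb a g h).
Proof.
  intros Ag Ah Ha.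
  destruct (Req_dec a 0) as [-> | Ha0]; [rewrite comb_0; exact Ah |].
  destruct (Req_dec a 1) as [-> | Ha1]; [rewrite comb_1; exact Ag |].
  assert (Ha' : 0 < a < 1) by lra.
  destruct Ag as [[Xg [cg [Hcg Hg]]] [_ Wg]], Ah as [[Xh [ch [Hch Hh]]] [_ Wh]].
  assert (Xc : XM (comb a g h)) by (apply comb_XM; assumption).
  assert (Wc : lll (comb a g h) fs) by (apply lll_fsharp_comb; assumption).
  split; [split; [exact Xc |] | split; [exact Xc | exact Wc]].
  exists (Rmax cg ch); split; [apply Rmax_lub_lt; assumption |].
  apply (epi_close_between k cg ch fs g h); [exact Hg | exact Hh |]; intros x; split.
  - apply dist_epi_union; try apply XM_proper; try assumption.
    intros y; apply epi_comb_sub_union, Ha'.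
  - apply dist_epi_antitone; [apply proper_fsharp | apply XM_proper, Xc |].
    apply epi_sub_of_le, le_fsharp_of_lll, Wc.
Qed.

(* [f] is lsc, and [g] is usc on the domain of [f#], being convex and finite beyond both ends. *)
Lemma lll_fsharp_gap g :
  XM g -> lll g fs ->
  exists del, 0 < del /\ forall t, el + e <= t <= er - e -> fval g t + del <= fval f t + margin.
Proof.
  intros Xg Wg; pose proof eps_bounds.
  apply lll_fsharp_iff in Wg as [[t1 [D1 T1]] [[t2 [D2 T2]] Lg]].
  destruct (lsc_on_pos_lower_bound (el + e) (er - e) (fun t => (fval f t + margin) + - fval g t))
    as [del [Hdel Hlow]].
  - lra.
  - intros t Ht; destruct (lt_fsharp_inv g t Ht (Lg t Ht)) as [x [Hx Hxf]].
    rewrite (fval_Fin _ _ _ Hx); lra.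
  - apply lsc_on_plus.
    + apply XM_lsc_on; [exact Hf |]; intros t Ht; apply dom_f_eta; lra.
    + apply (convex_usc_on g t1 t2); [apply Xg | exact D1 | exact D2 | exact T1 | exact T2].
  - exists del; split; [exact Hdel |]; intros t Ht; specialize (Hlow t Ht); lra.
Qed.

Lemma A_open g : A f k e g -> exists m, (0 < m)%nat /\ forall h, V m g h -> A f k e h.
Proof.
  intros [[Xg [cg [Hcg Hg]]] [_ Wg]]; pose proof eps_bounds.
  destruct (lll_fsharp_gap g Xg Wg) as [del [Hdel Hgap]].
  apply lll_fsharp_iff in Wg as [[t1 [D1 T1]] [[t2 [D2 T2]] _]].
  destruct (epi_close_convex_upper g t1 t2 (el + e) (er - e) del Xg D1 D2 T1 ltac:(lra) T2 Hdel)
    as [N HN].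
  destruct (Rinv_INR_eventually_lt (/ INR k - cg) ltac:(lra)) as [N' HN'].
  set (m := Nat.max (Nat.max N N') k).
  exists m; split; [lia |]; intros h [Xh [ch [Hch Hh]]].
  specialize (HN' m ltac:(lia)).
  destruct (HN m h ch ltac:(lia) Xh Hch Hh) as [Hl [Hr Hup]].
  assert (Hkm : INR k <= INR m) by (apply le_INR; lia).
  split; [split; [exact Xh |] | split; [exact Xh |]].
  - exists (cg + ch); split; [lra |].
    apply (epi_close_trans k cg ch fs g h Hg), (epi_close_shrink k m); assumption.
  - apply lll_fsharp_iff; split; [exact Hl | split; [exact Hr |]].
    intros t Ht; destruct (Hup t Ht) as [ht [Hht Hlt]].
    rewrite Hht, fsharp_in by exact Ht; cbn; specialize (Hgap t Ht); lra.
Qed.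

End Sharp.

Lemma A_double_sub_V f k e h :
  XM f -> f 0 = Fin 1 -> (0 < k)%nat -> eps_ok f (2 * k) e -> A f (2 * k) e h -> V k f h.
Proof.
  intros Hf Hf0 Hk He [[Xh [c1 [Hc1 H1]]] _].
  destruct (fsharp_epi_close f (2 * k) e Hf Hf0 ltac:(lia) He) as [c2 [Hc2 H2]].
  assert (H2k : INR (2 * k) = 2 * INR k) by (rewrite mult_INR; reflexivity).
  pose proof (lt_0_INR k Hk).
  assert (Hhalf : / INR (2 * k) + / INR (2 * k) = / INR k) by (rewrite H2k; field; lra).
  split; [exact Xh |]; exists (c2 + c1); split; [lra |].
  apply (epi_close_shrink k (2 * k)); [rewrite H2k; lra |].
  apply (epi_close_trans _ _ _ _ (fsharp f (2 * k) e)); [apply epi_close_sym |]; assumption.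
Qed.

Theorem mainTheorem6 (f : fn) (Hf : XM f) (Hf0 : f 0 = Fin 1)
  (Hdom : exists t, t <> 0 /\ dom f t)
  (eps : nat -> R) (Heps : forall k, (0 < k)%nat -> eps_ok f k (eps k)) :
  (forall k, (0 < k)%nat ->
     AW_open (A f k (eps k)) /\
     A f k (eps k) f /\
     (forall g h a, A f k (eps k) g -> A f k (eps k) h -> 0 <= a <= 1 ->
        A f k (eps k) (comb a g h))) /\
  (forall k, (0 < k)%nat -> forall h, A f (2 * k)%nat (eps (2 * k)%nat) h -> V k f h) /\
  (forall U, AW_open U -> U f ->
     exists k, (0 < k)%nat /\ forall h, A f k (eps k) h -> U h).
Proof.
  assert (Hsub : forall k, (0 < k)%nat -> forall h, A f (2 * k) (eps (2 * k)%nat) h -> V k f h)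
    by (intros k Hk h; apply A_double_sub_V; [exact Hf | exact Hf0 | exact Hk | apply Heps; lia]).
  split; [| split; [exact Hsub |]].
  - intros k Hk; pose proof (Heps k Hk) as He.
    split; [split | split].
    + intros g [[Xg _] _]; exact Xg.
    + intros g Ag; apply (A_open f k (eps k)); assumption.
    + apply A_self; assumption.
    + intros g h a; apply A_comb; assumption.
  - intros U [_ HU] Uf; destruct (HU f Uf) as [k [Hk HV]].
    exists (2 * k)%nat; split; [lia |]; intros h Ah; apply HV, Hsub; assumption.
Qed.
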